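(* Let $\iota:M(\mathbb R(y))\to M(\mathbb R(x,y))$ be an injective map compatible with restriction such that all places in the image of $\iota$ have the same restriction to $\mathbb R(x)$. Suppose that for some $\xi\in\mathrm{im}(\iota)$ with $\xi(x)=a\in\mathbb R$ and $\xi(y)=b\in\mathbb R$ there is $n\in\mathbb N$ with $0<v_\xi(x-a)<n\,v_\xi(y-b)$. Then $\iota$ is not continuous. The same holds if $\xi(x)=\infty$ and $x-a$ is replaced by $1/x$, and/or $\xi(y)=\infty$ and $y-b$ is replaced by $1/y$.
   Context: For a field $K$, $M(K)$ is the set of $\mathbb R$-places $K\to\mathbb R\cup\{\infty\}$, with topology generated by the subbasis $H'(b)=\{\zeta\in M(K)\mid \infty\ne\zeta(b)>0\}$, $b\in K$. $\iota$ is compatible with restriction if $\iota(\zeta)|_{\mathbb R(y)}=\zeta$ for all $\zeta$. $v_\xi$ denotes the valuation associated with the place $\xi$, with values in an ordered abelian group. *)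

From HB Require Import structures.
From mathcomp Require Import all_boot all_order all_algebra.
From mathcomp Require Import Rstruct.
Set Implicit Arguments.
Unset Strict Implicit.
Unset Printing Implicit Defensive.
Import Order.TTheory GRing.Theory Num.Theory.
Local Open Scope ring_scope.

Notation RR := Rdefinitions.R.

(** An R-place of a field [K] is a place [K -> R \cup {oo}]; we model
   [R \cup {oo}] by [option RR], where [None] is [oo].  The conditions say:
   the finite locus [O := {a | zeta a <> oo}] is closed under [1, +, -, *]
   and [zeta] is a ring morphism on it, and for [a <> 0],
   [zeta a = oo <-> zeta (a^-1) = 0].  (Hence [O] is a valuation ring
   with maximal ideal [zeta^-1(0)] and [zeta] induces an embedding of the
   residue field into R: this is the usual notion of a place.) *)
Definition is_place (K : fieldType) (zeta : K -> option RR) : Prop :=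
  [/\ zeta 1 = Some 1,
      forall a b r s, zeta a = Some r -> zeta b = Some s ->
        zeta (a + b) = Some (r + s) /\ zeta (a * b) = Some (r * s),
      forall a r, zeta a = Some r -> zeta (- a) = Some (- r)
    & forall a, a != 0 -> (zeta a = None <-> zeta a^-1 = Some 0)].

Definition place (K : fieldType) := {zeta : K -> option RR | is_place zeta}.

Definition pl (K : fieldType) (z : place K) : K -> option RR := proj1_sig z.

Definition H' (K : fieldType) (b : K) (z : place K) : Prop :=
  exists r, pl z b = Some r /\ 0 < r.

(** Open sets of the topology on [M(K)] generated by the subbasis
   [{H'(b) | b \in K}]: unions of finite intersections of subbasic sets. *)
Definition is_open (K : fieldType) (U : place K -> Prop) : Prop :=
  forall z, U z -> exists bs : seq K,
    (forall b, b \in bs -> H' b z) /\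
    (forall w, (forall b, b \in bs -> H' b w) -> U w).

Definition continuous_map (K L : fieldType) (f : place K -> place L) : Prop :=
  forall U : place L -> Prop, is_open U -> is_open (fun z => U (f z)).

(** With valuation ring [O_xi = {h | xi h <> oo}], the associated valuation
   satisfies [v_xi f <= v_xi g] iff [g \in f * O_xi]; the value group is
   totally ordered, so [v_xi f < v_xi g] iff not [v_xi g <= v_xi f]. *)
Definition vle (K : fieldType) (xi : place K) (f g : K) : Prop :=
  exists h, pl xi h <> None /\ g = f * h.

Definition vlt (K : fieldType) (xi : place K) (f g : K) : Prop :=
  ~ vle xi g f.

(** [Ky = R(y) = Frac R[y]] and [Kxy = R(y)(x) = Frac (R(y)[x])], which is
   (canonically isomorphic to) R(x,y). *)
Local Notation "x %:F" := (@FracField.tofrac _ x).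

Definition Ky : fieldType := {fraction {poly RR}}.
Definition Kxy : fieldType := {fraction {poly Ky}}.

Definition emb (f : Ky) : Kxy := (f%:P)%:F.

Definition yvar : Kxy := emb ('X%:F).
Definition xvar : Kxy := ('X : {poly Ky})%:F.

Definition cst (c : RR) : Kxy := emb ((c%:P)%:F).

(** the polynomial p(x) in R(x,y), for p a real polynomial; elements of the
   subfield R(x) of R(x,y) are exactly the [polx p / polx q]. *)
Definition polx (p : {poly RR}) : Kxy :=
  (map_poly (fun c : RR => ((c%:P)%:F : Ky)) p)%:F.

Definition restr_y (z : place Kxy) : Ky -> option RR := fun f => pl z (emb f).

Definition locpar (xi : place Kxy) (t : Kxy) : Kxy :=
  match pl xi t with Some a => t - cst a | None => t^-1 end.

(* Let xi = iota z0 and X, Y the local parameters of xi at x and y.  Then xi(X) = 0,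
   and v(X) < n v(Y) says xi(Y^n / X) = 0, so g := 1 - Y^n / X lies in the open set
   H'(g) around xi.  Continuity of iota yields b_1, ..., b_k in R(y), positive at
   z0 = xi|R(y), such that every place of R(y) where all b_i are positive is sent into
   H'(g).  Since an R-place fixes the real constants, z0 is evaluation at y = z0(y) on
   its valuation ring, and positivity of b_i at z0 is a sign condition on polynomials
   that persists for the evaluation places y |-> t with t near z0(y) (or t large when
   z0(y) = oo).  Pick such a t with Y(t) finite and nonzero: the image w' of this
   evaluation place agrees with xi on R(x), so w'(X) = 0 while w'(Y) is a nonzero real,
   whence w'(g) = oo, contradicting w' in H'(g). *)

From HB Require Import structures.
From mathcomp Require Import all_boot all_order all_algebra.
From mathcomp Require Import Rstruct.
From mathcomp Require Import ring lra.
From mathcomp Require Import polyrcf.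
From Stdlib Require Import ClassicalEpsilon.
Import Order.TTheory GRing.Theory Num.Theory.
Local Open Scope ring_scope.
Set Implicit Arguments.
Unset Strict Implicit.

Local Notation "x %:F" := (@FracField.tofrac _ x).
Local Notation yK := (('X : {poly RR})%:F : Ky).

Lemma gt0_div_mul (F : realFieldType) (x y : F) : (0 < x / y) = (0 < x * y).
Proof.
have [->|y0] := eqVneq y 0; first by rewrite invr0 !mulr0.
have y2 : 0 < y ^+ 2 by rewrite exprn_even_gt0.
by rewrite -(pmulr_lgt0 _ y2) -mulrA expr2 mulKf.
Qed.

Lemma div_MXaddC_exprS (F : fieldType) (a b y : F) n : y != 0 ->
  (a * y + b) / y ^+ n.+1 = a / y ^+ n + b * y^-1 ^+ n.+1.
Proof. by move=> y0; rewrite !exprS exprVn; field; rewrite expf_neq0. Qed.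

Lemma poly_neq0_horner (R : nzRingType) (p : {poly R}) t : p.[t] != 0 -> p != 0.
Proof. by apply: contraNneq => ->; rewrite horner0. Qed.

(** * Arithmetic of R-places *)

Section PlaceArithmetic.
Variables (K : fieldType) (z : place K).
Implicit Types (a b : K) (r s : RR).
Local Notation v := (pl z).

Let axioms : is_place v := proj2_sig z.

Lemma place1 : v 1 = Some 1. Proof. by case: axioms. Qed.

Lemma placeD a b r s : v a = Some r -> v b = Some s -> v (a + b) = Some (r + s).
Proof. by case: axioms => _ H _ _ /H/[apply] -[]. Qed.

Lemma placeM a b r s : v a = Some r -> v b = Some s -> v (a * b) = Some (r * s).
Proof. by case: axioms => _ H _ _ /H/[apply] -[]. Qed.

Lemma placeN a r : v a = Some r -> v (- a) = Some (- r).
Proof. by case: axioms => _ _ H _; apply: H. Qed.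

Lemma place_ooE a : a != 0 -> (v a = None <-> v a^-1 = Some 0).
Proof. by case: axioms => _ _ _ H; apply: H. Qed.

Lemma place0 : v 0 = Some 0.
Proof. by have := placeD place1 (placeN place1); rewrite !subrr. Qed.

Lemma placeB a b r s : v a = Some r -> v b = Some s -> v (a - b) = Some (r - s).
Proof. by move=> ha /placeN; apply: placeD. Qed.

Lemma placeX a r n : v a = Some r -> v (a ^+ n) = Some (r ^+ n).
Proof.
by move=> ha; elim: n => [|n IH]; rewrite ?expr0 ?place1 // !exprS (placeM ha IH).
Qed.

Lemma place_natr n : v n%:R = Some n%:R.
Proof. by elim: n => [|n IH]; rewrite ?place0 // -addn1 !natrD (placeD IH place1). Qed.

Lemma place_intr (m : int) : v m%:~R = Some m%:~R.
Proof. by case: m => n; rewrite ?NegzE ?mulrNz ?(placeN (place_natr _)) // place_natr. Qed.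

Lemma place_neq0 a r : v a = Some r -> r != 0 -> a != 0.
Proof. by move=> ha; apply: contra => /eqP a0; move: ha; rewrite a0 place0 => -[->]. Qed.

Lemma place_oo_neq0 a : v a = None -> a != 0.
Proof. by apply: contraPneq => ->; rewrite place0. Qed.

Lemma placeV_oo a : v a = None -> v a^-1 = Some 0.
Proof. by move=> ha; apply/(place_ooE (place_oo_neq0 ha)). Qed.

Lemma placeV0 a : a != 0 -> v a = Some 0 -> v a^-1 = None.
Proof. by move=> a0 ha; apply/place_ooE; rewrite ?invrK ?invr_eq0. Qed.

Lemma placeV a r : v a = Some r -> r != 0 -> v a^-1 = Some r^-1.
Proof.
move=> ha r0; case hv: (v a^-1) => [s|].
  have := placeM ha hv; rewrite mulfV ?(place_neq0 ha) // place1 => -[e].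
  by rewrite -[s](mulKf r0) -e mulr1.
by move: (placeV_oo hv); rewrite invrK ha => -[r0']; rewrite r0' eqxx in r0.
Qed.

Lemma placeM_oo a b s : v a = None -> v b = Some s -> s != 0 -> v (a * b) = None.
Proof.
move=> ha hb s0; apply/place_ooE.
  by rewrite mulf_neq0 ?(place_oo_neq0 ha) ?(place_neq0 hb).
by rewrite invfM (placeM (placeV_oo ha) (placeV hb s0)) mul0r.
Qed.

Lemma placeB_oo a b s : v a = None -> v b = Some s -> v (b - a) = None.
Proof.
move=> ha hb; case h: (v (b - a)) => [u|] //.
by have := placeB hb h; rewrite opprB addrC subrK ha.
Qed.

End PlaceArithmetic.

(* An R-place is finite on the reals, because s^2 + 1 never has value 0; so it induces
   a ring endomorphism of R, which maps squares to squares, hence is monotone, hence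
   is the identity. *)
Section PlaceRealConstants.
Variables (K : fieldType) (z : place K) (e : {rmorphism RR -> K}).
Local Notation v := (pl z).

Lemma place_sqrD1_neq0 u : v (u ^+ 2 + 1) <> Some 0.
Proof.
case hu: (v u) => [r|].
  rewrite (placeD (placeX 2 hu) (place1 z)) => -[]; apply/eqP.
  by rewrite gt_eqF ?ltr_wpDl ?sqr_ge0.
have u0 := place_oo_neq0 hu.
have -> : u ^+ 2 + 1 = u ^+ 2 * (u^-1 ^+ 2 + 1) by field.
have h1 : v (u^-1 ^+ 2 + 1) = Some 1.
  by rewrite (placeD (placeX 2 (placeV_oo hu)) (place1 z)) expr0n add0r.
have uu : v (u ^+ 2) = None.
  apply/place_ooE; first by rewrite expf_neq0.
  by rewrite -exprVn (placeX 2 (placeV_oo hu)) expr0n.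
by rewrite (placeM_oo uu h1) ?oner_neq0.
Qed.

Lemma place_rmorph_neq0 d : d != 0 -> v (e d) <> Some 0.
Proof.
move=> d0 hd; set N := Num.Def.archi_bound ((d ^+ 2)^-1).
have d2 : 0 < d ^+ 2 by rewrite exprn_even_gt0.
have N1 : 1 <= N%:R * d ^+ 2.
  by rewrite -ler_pdivrMr // div1r ltW // archi_boundP // invr_ge0 ltW.
set s := Num.sqrt (N%:R * d ^+ 2 - 1).
have sD1 : s ^+ 2 + 1 = N%:R * d ^+ 2 by rewrite sqr_sqrtr ?subr_ge0 // subrK.
apply: (@place_sqrD1_neq0 (e s)).
rewrite -rmorphXn -(rmorph1 e) -rmorphD sD1 rmorphM rmorphXn rmorph_nat.
by rewrite (placeM (place_natr z N) (placeX 2 hd)) expr0n mulr0.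
Qed.

Lemma place_rmorph_fin c : v (e c) <> None.
Proof.
move=> hc; have c0 : c != 0 by apply: contraPneq hc => ->; rewrite rmorph0 place0.
by apply: (place_rmorph_neq0 (invr_neq0 c0)); rewrite fmorphV placeV_oo.
Qed.

Lemma place_rmorph_ge0 d r : 0 <= d -> v (e d) = Some r -> 0 <= r.
Proof.
move=> d0; rewrite -(sqr_sqrtr d0) rmorphXn.
case hs: (v (e (Num.sqrt d))) => [t|]; last by have := place_rmorph_fin hs.
by rewrite (placeX 2 hs) => -[<-]; rewrite sqr_ge0.
Qed.

Lemma place_rmorph_le c r : v (e c) = Some r -> r <= c.
Proof.
move=> hc; rewrite leNgt; apply/negP => cr.
set N := Num.Def.archi_bound (r - c)^-1.
have N1 : 1 < N%:R * (r - c).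
  by rewrite -ltr_pdivrMr ?subr_gt0 // div1r archi_boundP // invr_ge0 subr_ge0 ltW.
set m := Num.floor (N%:R * c) + 1.
have m_gt : N%:R * c < m%:~R by apply: floorD1_gt.
have m_le : m%:~R <= N%:R * c + 1 by rewrite intrD lerD2r floor_le.
have hd : v (e (m%:~R - N%:R * c)) = Some (m%:~R - N%:R * r).
  rewrite rmorphB rmorph_int rmorphM rmorph_nat.
  by rewrite (placeB (place_intr z m) (placeM (place_natr z N) hc)).
have := place_rmorph_ge0 (ltW _) hd; rewrite subr_gt0 subr_ge0 => /(_ m_gt).
by lra.
Qed.

Lemma place_rmorph c : v (e c) = Some c.
Proof.
case hc: (v (e c)) => [r|]; last by have := place_rmorph_fin hc.
have hN : v (e (- c)) = Some (- r) by rewrite rmorphN (placeN hc).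
by congr Some; apply/eqP; rewrite eq_le (place_rmorph_le hc) -lerN2 (place_rmorph_le hN).
Qed.

End PlaceRealConstants.

(** * Evaluation places of R(y) *)

Section FractionRepresentation.
Variable R : idomainType.

Lemma fracP (f : {fraction R}) : exists p q : R, q != 0 /\ f = p%:F / q%:F.
Proof.
elim/quotW: f => x; exists x.1, x.2; split; first exact: denom_ratioP.
have q0 : x.2%:F != 0 :> {fraction R} by rewrite tofrac_eq0 denom_ratioP.
apply: (mulIf q0); rewrite mulfVK // !piE; apply/eqmodP.
rewrite /= equivfE /= !numden_Ratio ?mulf_neq0 ?denom_ratioP ?oner_neq0 //.
by rewrite !mulr1 mulrC.
Qed.

Lemma tofrac_divMr (p q c : R) :
  c != 0 -> (p * c)%:F / (q * c)%:F = p%:F / q%:F :> {fraction R}.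
Proof. by move=> c0; rewrite !rmorphM invfM mulrACA divff ?mulr1 ?tofrac_eq0. Qed.

End FractionRepresentation.

Lemma frac_split_root (D : idomainType) (t : D) (p q : {poly D}) : p != 0 -> q != 0 ->
  exists p1 q1 : {poly D}, [/\ p1.[t] != 0, q1.[t] != 0 &
    (exists k, p%:F / q%:F = (p1 * ('X - t%:P) ^+ k)%:F / q1%:F) \/
    (exists k, p%:F / q%:F = p1%:F / (q1 * ('X - t%:P) ^+ k.+1)%:F)].
Proof.
move=> p0 q0.
have [m [p1 /implyP/(_ p0) p1t ->]] := multiplicity_XsubC p t.
have [m' [q1 /implyP/(_ q0) q1t ->]] := multiplicity_XsubC q t.
exists p1, q1; split => //.
have Xt0 n : ('X - t%:P) ^+ n != 0 by rewrite expf_neq0 // polyXsubC_eq0.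
have [m'_le|m_lt] := leqP m' m; [left; exists (m - m')%N | right; exists (m' - m.+1)%N].
  by rewrite -(subnK m'_le) exprD mulrA tofrac_divMr // subnK.
by rewrite -[in LHS](subnK m_lt) -addSnnS exprD mulrA tofrac_divMr.
Qed.

Implicit Types (p q : {poly RR}) (f : Ky).

Section EvaluationPlaces.
Implicit Types (t r : RR) (g : Ky).

Definition value_at t f r :=
  exists p q, [/\ q.[t] != 0, f = p%:F / q%:F & r = p.[t] / q.[t]].

Lemma value_at_uniq t f r r' : value_at t f r -> value_at t f r' -> r = r'.
Proof.
move=> [p [q [qt0 -> ->]]] [p' [q' [q't0 e ->]]].
have : (p * q')%:F == (p' * q)%:F :> Ky.
  have [q0 q'0] := (poly_neq0_horner qt0, poly_neq0_horner q't0).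
  by rewrite !rmorphM -eqr_div ?tofrac_eq0 // e.
rewrite tofrac_eq => /eqP/(congr1 (horner^~ t)); rewrite !hornerM => pq.
by apply/eqP; rewrite eqr_div // pq.
Qed.

Lemma value_at_poly t p : value_at t p%:F p.[t].
Proof. by exists p, 1; rewrite hornerC rmorph1 !divr1 oner_neq0. Qed.

Lemma value_at1 t : value_at t 1 1.
Proof. by have := value_at_poly t 1; rewrite tofrac1 hornerC. Qed.

Lemma value_atN t f r : value_at t f r -> value_at t (- f) (- r).
Proof. by move=> [p [q [qt0 -> ->]]]; exists (- p), q; rewrite rmorphN hornerN !mulNr. Qed.

Lemma value_atD t f g r s :
  value_at t f r -> value_at t g s -> value_at t (f + g) (r + s).
Proof.
move=> [p [q [qt0 -> ->]]] [p' [q' [q't0 -> ->]]].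
have q0 : q%:F != 0 :> Ky by rewrite tofrac_eq0 (poly_neq0_horner qt0).
have q'0 : q'%:F != 0 :> Ky by rewrite tofrac_eq0 (poly_neq0_horner q't0).
exists (p * q' + p' * q), (q * q'); split; first by rewrite hornerM mulf_neq0.
  by rewrite addf_div // rmorphD !rmorphM.
by rewrite addf_div // !hornerE.
Qed.

Lemma value_atM t f g r s :
  value_at t f r -> value_at t g s -> value_at t (f * g) (r * s).
Proof.
move=> [p [q [qt0 -> ->]]] [p' [q' [q't0 -> ->]]].
by exists (p * p'), (q * q'); split; rewrite ?hornerM ?mulf_neq0 // !mulf_div ?rmorphM.
Qed.

Lemma value_at_or_inv0 t f : f != 0 -> (exists r, value_at t f r) \/ value_at t f^-1 0.
Proof.
have [p [q [q0 ->]]] := fracP f => f0.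
have p0 : p != 0 by apply: contraNneq f0 => ->; rewrite rmorph0 mul0r.
have [p1 [q1 [p1t q1t [[k ->]|[k ->]]]]] := frac_split_root t p0 q0.
  by left; exists ((p1 * ('X - t%:P) ^+ k).[t] / q1.[t]); exists (p1 * ('X - t%:P) ^+ k), q1.
right; exists (q1 * ('X - t%:P) ^+ k.+1), p1; rewrite invf_div.
by rewrite !hornerE subrr expr0n mulr0 mul0r.
Qed.

Definition ev t f : option RR :=
  match excluded_middle_informative (exists r, value_at t f r) with
  | left H => Some (proj1_sig (constructive_indefinite_description _ H))
  | right _ => None
  end.

Lemma evP t f r : ev t f = Some r <-> value_at t f r.
Proof.
rewrite /ev; case: excluded_middle_informative => [H|H]; last first.
  by split => // vr; case: H; exists r.
case: constructive_indefinite_description => r' /= vr'.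
by split => [[<-] | /(value_at_uniq vr') ->].
Qed.

Lemma ev_place t : is_place (ev t).
Proof.
split.
- exact/evP/value_at1.
- by move=> f g r s /evP vr /evP vs; split; apply/evP; [apply: value_atD | apply: value_atM].
- by move=> f r /evP /value_atN /evP.
move=> f f0; split => [hf|/evP vf'].
  have [[r /evP]|/evP //] := value_at_or_inv0 t f0; by rewrite hf.
case hf: (ev t f) => [r|] //; move/evP: hf => vf.
have := value_atM vf vf'; rewrite mulfV // mulr0 => /(value_at_uniq (value_at1 t)).
by move/eqP; rewrite oner_eq0.
Qed.

Definition evp t : place Ky := exist _ (ev t) (ev_place t).

End EvaluationPlaces.

(** * R-places of R(y) *)

Definition Ky_const : {rmorphism RR -> Ky} := (@FracField.tofrac _) \o polyC.

Lemma yK_neq0 : yK != 0. Proof. by rewrite tofrac_eq0 polyX_eq0. Qed.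

Lemma place_Ky_const (z : place Ky) c : pl z (c%:P)%:F = Some c.
Proof. exact: (place_rmorph z Ky_const). Qed.

Lemma evp_yK t : pl (evp t) yK = Some t.
Proof. by apply/evP; have := value_at_poly t 'X; rewrite hornerX. Qed.

Lemma evp_frac_gt0 p q t : 0 < (p * q).[t] -> H' (p%:F / q%:F) (evp t).
Proof.
rewrite hornerM -gt0_div_mul => pq; exists (p.[t] / q.[t]); split => //; apply/evP.
by exists p, q; split => //; apply: contraTneq pq => ->; rewrite invr0 mulr0 ltxx.
Qed.

Section FinitePlaces.
Variables (z : place Ky) (beta : RR).
Hypothesis zy : pl z yK = Some beta.

Lemma place_fin_poly p : pl z p%:F = Some p.[beta].
Proof.
elim/poly_ind: p => [|p c IH]; first by rewrite rmorph0 horner0 place0.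
by rewrite rmorphD rmorphM hornerMXaddC (placeD (placeM IH zy) (place_Ky_const z c)).
Qed.

Lemma place_fin_frac p q :
  q.[beta] != 0 -> pl z (p%:F / q%:F) = Some (p.[beta] / q.[beta]).
Proof.
by move=> q0; rewrite (placeM (place_fin_poly p) (placeV (place_fin_poly q) q0)).
Qed.

Lemma place_fin_value_at f r : pl z f = Some r -> value_at beta f r.
Proof.
have [->|f0] := eqVneq f 0.
  by rewrite place0 => -[<-]; have := value_at_poly beta 0; rewrite rmorph0 horner0.
have [p [q [q0 ef]]] := fracP f.
have p0 : p != 0 by apply: contraNneq f0 => p0; rewrite ef p0 rmorph0 mul0r.
have [p1 [q1 [p1b q1b [[k ek]|[k ek]]]]] := frac_split_root beta p0 q0.
  by rewrite ef ek place_fin_frac // => -[<-]; exists (p1 * ('X - beta%:P) ^+ k), q1.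
have f'0 : pl z f^-1 = Some 0.
  by rewrite ef ek invf_div place_fin_frac // !hornerE subrr expr0n mulr0 mul0r.
by rewrite -[f]invrK (placeV0 _ f'0) ?invr_eq0.
Qed.

End FinitePlaces.

Section InfinitePlaces.
Variable z : place Ky.
Hypothesis zy : pl z yK = None.

Lemma place_oo_lead p : p != 0 -> pl z (p%:F / yK ^+ (size p).-1) = Some (lead_coef p).
Proof.
elim/poly_ind: p => [|q c IH] p0; first by rewrite eqxx in p0.
have [q0|q0] := eqVneq q 0.
  move: p0; rewrite q0 mul0r add0r polyC_eq0 => c0.
  by rewrite size_polyC c0 expr0 divr1 lead_coefC place_Ky_const.
have sq : size q = (size q).-1.+1 by rewrite prednK // size_poly_gt0.
have -> : lead_coef (q * 'X + c%:P) = lead_coef q.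
  rewrite lead_coefDl ?lead_coefMX // size_mulX // size_polyC ltnS.
  by rewrite (leq_trans (leq_b1 _)) ?size_poly_gt0.
rewrite size_MXaddC (negbTE q0) /= rmorphD rmorphM sq div_MXaddC_exprS ?yK_neq0 // -sq.
rewrite (placeD (IH q0) (placeM (place_Ky_const z c) (placeX _ (placeV_oo zy)))).
by rewrite sq expr0n mulr0 addr0.
Qed.

Lemma place_oo_small p n : (size p <= n)%N -> pl z (p%:F / yK ^+ n) = Some 0.
Proof.
have [->|p0] := eqVneq p 0; first by rewrite rmorph0 mul0r place0.
move=> pn; have mn : ((size p).-1 < n)%N by rewrite -ltnS prednK ?size_poly_gt0.
have -> : p%:F / yK ^+ n = p%:F / yK ^+ (size p).-1 * yK^-1 ^+ (n - (size p).-1).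
  by rewrite exprVn -mulrA -invfM -exprD subnKC // ltnW.
rewrite (placeM (place_oo_lead p0) (placeX _ (placeV_oo zy))).
by rewrite expr0n subn_eq0 leqNgt mn mulr0.
Qed.

Lemma place_oo_frac p q : q != 0 -> (size p <= size q)%N ->
  pl z (p%:F / q%:F) = Some (if size p == size q then lead_coef p / lead_coef q else 0).
Proof.
move=> q0 pq; have lq : lead_coef q != 0 by rewrite lead_coef_eq0.
have -> : p%:F / q%:F = (p%:F / yK ^+ (size q).-1) / (q%:F / yK ^+ (size q).-1).
  by rewrite invf_div mulrA divfK // expf_neq0 ?yK_neq0.
have [e|ne] := eqVneq (size p) (size q).
  have p0 : p != 0 by rewrite -size_poly_gt0 e size_poly_gt0.
  by rewrite -{1}e (placeM (place_oo_lead p0) (placeV (place_oo_lead q0) lq)).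
have pd : (size p <= (size q).-1)%N by rewrite -ltnS prednK ?size_poly_gt0 // ltn_neqAle ne.
by rewrite (placeM (place_oo_small pd) (placeV (place_oo_lead q0) lq)) mul0r.
Qed.

End InfinitePlaces.

(** * Neighbourhoods of places of R(y) *)

Definition is_filter (T : Type) (E : (T -> Prop) -> Prop) :=
  [/\ E (fun _ => True),
      forall A B, E A -> E B -> E (fun t => A t /\ B t)
    & forall A B : T -> Prop, (forall t, A t -> B t) -> E A -> E B].

Lemma filter_forall_in (T : Type) (I : eqType) (E : (T -> Prop) -> Prop)
    (P : I -> T -> Prop) (s : seq I) :
  is_filter E -> (forall i, i \in s -> E (P i)) ->
  E (fun t => forall i, i \in s -> P i t).
Proof.
case=> ET EI EM; elim: s => [|i s IH] Ps; first by move: ET; apply: EM => t _ i.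
have Ps' j : j \in s -> E (P j) by move=> js; apply: Ps; rewrite inE js orbT.
move: (EI _ _ (Ps i (mem_head i s)) (IH Ps')).
by apply: EM => t [Pi Pst] j; rewrite inE => /predU1P [->|] //; apply: Pst.
Qed.

Definition near_pt (beta : RR) (P : RR -> Prop) :=
  exists2 d, 0 < d & forall t, `|t - beta| < d -> P t.

Definition near_pinfty (P : RR -> Prop) := exists N, forall t, N <= t -> P t.

Lemma near_pt_filter beta : is_filter (near_pt beta).
Proof.
split; first by exists 1.
- move=> A B [d d0 Ad] [e e0 Be]; exists (Num.min d e); first by rewrite lt_min d0.
  by move=> t; rewrite lt_min => /andP[td te]; split; [apply: Ad | apply: Be].
by move=> A B AB [d d0 Ad]; exists d => // t /Ad /AB.
Qed.

Lemma near_pinfty_filter : is_filter near_pinfty.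
Proof.
split; first by exists 0.
- move=> A B [M AM] [N BN]; exists (Num.max M N) => t.
  by rewrite ge_max => /andP[Mt Nt]; split; [apply: AM | apply: BN].
by move=> A B AB [N AN]; exists N => t /AN /AB.
Qed.

Lemma value_at_gt0_near beta f r :
  value_at beta f r -> 0 < r -> near_pt beta (fun t => H' f (evp t)).
Proof.
move=> [p [q [qb -> ->]]]; rewrite gt0_div_mul -hornerM => pqb.
have [d d0 dP] := poly_cont beta (p * q) pqb.
exists d => // t /dP pq_near; apply: evp_frac_gt0.
by move: pq_near; rewrite ltr_distl subrr => /andP[].
Qed.

Lemma place_oo_gt0_near (z : place Ky) f :
  pl z yK = None -> H' f z -> near_pinfty (fun t => H' f (evp t)).
Proof.
move=> zy [r [zf r0]]; have [p [q [q0 ef]]] := fracP f.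
have [pq|qp] := leqP (size p) (size q).
  move: zf; rewrite ef (place_oo_frac zy q0 pq).
  case: eqP => [_ [er]|_ [r0']]; last by rewrite -r0' ltxx in r0.
  have lpq : 0 < lead_coef (p * q) by rewrite lead_coefM -gt0_div_mul er.
  have [N NP] := poly_pinfty_gt_lc lpq.
  by exists N => t /NP pqt; apply: evp_frac_gt0; apply: lt_le_trans pqt.
have p0 : p != 0 by rewrite -size_poly_gt0 (leq_ltn_trans _ qp).
have f0 : f^-1 != 0 by rewrite ef invf_div mulf_neq0 ?invr_eq0 ?tofrac_eq0.
have := place_oo_frac zy p0 (ltnW qp); rewrite (ltn_eqF qp) -invf_div -ef.
by move=> /(placeV0 f0); rewrite invrK zf.
Qed.

Definition ypar (z : place Ky) : Ky :=
  if pl z yK is Some beta then yK - (beta%:P)%:F else yK^-1.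

Lemma ypar_neq0 z : ypar z != 0.
Proof.
rewrite /ypar; case: (pl z yK) => [beta|]; last by rewrite invr_eq0 yK_neq0.
by rewrite -rmorphB tofrac_eq0 polyXsubC_eq0.
Qed.

Lemma nbhs_ypar (z : place Ky) (bs : seq Ky) : (forall b, b \in bs -> H' b z) ->
  exists w, (forall b, b \in bs -> H' b w) /\ exists2 u, u != 0 & pl w (ypar z) = Some u.
Proof.
rewrite /ypar; case zy: (pl z yK) => [beta|] zbs.
  have [d d0 dP] : near_pt beta (fun t => forall b, b \in bs -> H' b (evp t)).
    apply: (filter_forall_in (near_pt_filter beta)) => b /zbs [r [zb r0]].
    exact: value_at_gt0_near (place_fin_value_at zy zb) r0.
  have d2 : 0 < d / 2 by rewrite divr_gt0.
  exists (evp (beta + d / 2)); split.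
    by apply: dP; rewrite addrAC subrr add0r gtr0_norm // ltr_pdivrMr // ltr_pMr // ltr1n.
  exists (d / 2); first by rewrite gt_eqF.
  by rewrite (placeB (evp_yK _) (place_Ky_const _ _)) addrAC subrr add0r.
have [N NP] : near_pinfty (fun t => forall b, b \in bs -> H' b (evp t)).
  by apply: (filter_forall_in near_pinfty_filter) => b /zbs /(place_oo_gt0_near zy).
have t1 : 1 <= Num.max N 1 by rewrite le_max lexx orbT.
exists (evp (Num.max N 1)); split; first by apply: NP; rewrite le_max lexx.
exists (Num.max N 1)^-1; first by rewrite invr_eq0 gt_eqF // (lt_le_trans ltr01).
by rewrite (placeV (evp_yK _)) // gt_eqF // (lt_le_trans ltr01).
Qed.

(** * Places of R(x,y) *)

HB.instance Definition _ := GRing.RMorphism.copy emb ((@FracField.tofrac _) \o polyC).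
HB.instance Definition _ := GRing.RMorphism.copy cst (emb \o Ky_const).

Lemma restr_yE (xi : place Kxy) (z : place Ky) f :
  restr_y xi = pl z -> pl xi (emb f) = pl z f.
Proof. by move=> <-. Qed.

Lemma place_cst (xi : place Kxy) c : pl xi (cst c) = Some c.
Proof. exact: place_rmorph. Qed.

Lemma locpar_place0 (xi : place Kxy) t : pl xi (locpar xi t) = Some 0.
Proof.
rewrite /locpar; case xit: (pl xi t) => [a|]; last exact: placeV_oo.
by rewrite (placeB xit (place_cst xi a)) subrr.
Qed.

Lemma locpar_xvar_neq0 (xi : place Kxy) : locpar xi xvar != 0.
Proof.
rewrite /locpar; case: (pl xi xvar) => [a|]; last by rewrite invr_eq0 tofrac_eq0 polyX_eq0.
by rewrite /xvar /cst /emb -rmorphB tofrac_eq0 polyXsubC_eq0.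
Qed.

Lemma locpar_xvar_Rx (xi : place Kxy) : exists p q, locpar xi xvar = polx p / polx q.
Proof.
have polxE p : polx p = (map_poly Ky_const p)%:F by [].
rewrite /locpar; case: (pl xi xvar) => [a|].
  by exists ('X - a%:P), 1; rewrite !polxE map_polyXsubC rmorph1 rmorph1 divr1 rmorphB.
by exists 1, 'X; rewrite !polxE map_polyX rmorph1 rmorph1 div1r.
Qed.

Lemma locpar_yvar (xi : place Kxy) z :
  restr_y xi = pl z -> locpar xi yvar = emb (ypar z).
Proof.
move=> xiz; rewrite /locpar /ypar (restr_yE _ xiz).
by case: (pl z yK) => [beta|]; rewrite ?rmorphB ?fmorphV.
Qed.

Lemma vlt_place0 (K : fieldType) (xi : place K) (f g : K) :
  g != 0 -> vlt xi f g -> pl xi (g / f) = Some 0.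
Proof.
move=> g0 fg; rewrite -invf_div; apply: placeV_oo.
case e: (pl xi (f / g)) => [s|] //; case: fg.
by exists (f / g); rewrite e mulrC divfK.
Qed.

Lemma place_div0_oo (K : fieldType) (z : place K) a b s :
  a != 0 -> pl z a = Some 0 -> pl z b = Some s -> s != 0 -> pl z (b / a) = None.
Proof.
move=> a0 za zb s0; rewrite -invf_div; apply: placeV0.
  by rewrite mulf_neq0 ?invr_eq0 ?(place_neq0 zb).
by rewrite (placeM za (placeV zb s0)) mul0r.
Qed.

Lemma is_open_H' (K : fieldType) (b : K) : is_open (H' b).
Proof.
move=> z zb; exists [:: b]; split => [c|w]; first by rewrite inE => /eqP ->.
by apply; rewrite mem_head.
Qed.

Lemma continuous_H' (K L : fieldType) (iota : place K -> place L) (g : L) z0 :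
  continuous_map iota -> H' g (iota z0) ->
  exists bs : seq K, (forall b, b \in bs -> H' b z0) /\
    forall w, (forall b, b \in bs -> H' b w) -> H' g (iota w).
Proof. exact: (fun cont => cont _ (is_open_H' (b := g)) z0). Qed.

Unset Implicit Arguments.

Theorem proposition6p4 (iota : place Ky -> place Kxy) :
  injective iota ->
  (* compatible with restriction: iota(zeta)|_{R(y)} = zeta *)
  (forall zeta : place Ky, restr_y (iota zeta) = pl zeta) ->
  (* all places in the image have the same restriction to R(x) *)
  (forall zeta1 zeta2 : place Ky, forall p q : {poly RR},
      pl (iota zeta1) (polx p / polx q) = pl (iota zeta2) (polx p / polx q)) ->
  (* some xi in the image with 0 < v_xi(X) < n v_xi(Y), where X = x - a if
     xi(x) = a \in R and X = 1/x if xi(x) = oo, likewise Y for y *)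
  (exists zeta0 : place Ky, exists n : nat,
      vlt (iota zeta0) 1 (locpar (iota zeta0) xvar) /\
      vlt (iota zeta0) (locpar (iota zeta0) xvar)
                       (locpar (iota zeta0) yvar ^+ n)) ->
  ~ continuous_map iota.
Proof.
move=> _ iota_restr iota_Rx [z0 [n [_ vXY]]] iota_cont.
rewrite (locpar_yvar (iota_restr z0)) -rmorphXn in vXY.
set X := locpar _ xvar in vXY; set Yn := ypar z0 ^+ n in vXY.
have Yn0 : emb Yn != 0 by rewrite fmorph_eq0 expf_neq0 ?ypar_neq0.
have xi_g : H' (1 - emb Yn / X) (iota z0).
  by exists 1; rewrite (placeB (place1 _) (vlt_place0 Yn0 vXY)) subr0 ltr01.
have [bs [bs_z0 bs_g]] := continuous_H' iota_cont xi_g.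
have [w [bs_w [u u0 wY]]] := nbhs_ypar bs_z0.
have [p [q eX]] := locpar_xvar_Rx (iota z0).
have wX : pl (iota w) X = Some 0 by rewrite /X eX (iota_Rx w z0) -eX locpar_place0.
have wYn : pl (iota w) (emb Yn) = Some (u ^+ n).
  by rewrite (restr_yE _ (iota_restr w)) (placeX n wY).
have [r [wg _]] := bs_g w bs_w.
move: wg; rewrite (placeB_oo (place_div0_oo (locpar_xvar_neq0 _) wX wYn _) (place1 _)) //.
by rewrite expf_neq0.
Qed.
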